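(* Let $f,\beta_{(-1)},\beta_{(0)},\beta_{(1)}\in\mathbb{C}[x]$ be nonzero polynomials satisfying \[ f(x+1)\beta_{(1)}(x)+f(x)\beta_{(0)}(x)+f(x-1)\beta_{(-1)}(x)=0. \] Let $d_{f}=\deg(f)$, $d=\max\{\deg(\beta_{(i)}) : i=-1,0,1\}$, and write $\beta_{(i)}(x)=\sum_{j=0}^{d}\beta_{(i)}^{(j)}x^{j}$ with $\beta_{(i)}^{(j)}\in\mathbb{C}$ (with the convention $\beta_{(i)}^{(j)}=0$ for $j<0$). Then: (1) $\beta_{(-1)}^{(d)}+\beta_{(0)}^{(d)}+\beta_{(1)}^{(d)}=0$; in particular at least two of the $\beta_{(i)}$ have degree $d$. (2) If $\beta_{(-1)}^{(d)}-\beta_{(1)}^{(d)}\neq0$, then \[ d_{f}=\frac{\beta_{(-1)}^{(d-1)}+\beta_{(0)}^{(d-1)}+\beta_{(1)}^{(d-1)}}{\beta_{(-1)}^{(d)}-\beta_{(1)}^{(d)}}; \] in particular this expression is a (nonnegative) integer. (3) If $\beta_{(-1)}^{(d)}-\beta_{(1)}^{(d)}=0$, then $\beta_{(-1)}^{(d)}+\beta_{(1)}^{(d)}\neq0$ and \[ \left(\beta_{(-1)}^{(d-2)}+\beta_{(0)}^{(d-2)}+\beta_{(1)}^{(d-2)}\right)+d_{f}\left(-\beta_{(-1)}^{(d-1)}+\beta_{(1)}^{(d-1)}\right)+\binom{d_{f}}{2}\left(\beta_{(-1)}^{(d)}+\beta_{(1)}^{(d)}\right)=0, \] which is a nontrivial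 quadratic equation in $d_{f}$. *)

From mathcomp Require Import all_boot all_algebra.
From mathcomp Require Import complex.
From mathcomp Require Import Rstruct.
Set Implicit Arguments. Unset Strict Implicit. Unset Printing Implicit Defensive.
Import GRing.Theory Num.Theory.
Local Open Scope ring_scope.

Definition CC : numClosedFieldType := (Rdefinitions.R)[i].

(* Degree of a polynomial (deg 0 = 0 by convention, irrelevant here). *)
Definition deg (p : {poly CC}) : nat := (size p).-1.

Definition coefz (p : {poly CC}) (j : int) : CC :=
  match j with Posz n => p`_n | Negz _ => 0 end.

Definition shift (p : {poly CC}) (c : CC) : {poly CC} := p \Po ('X + c%:P).

From mathcomp Require Import all_boot all_algebra.
From mathcomp Require Import complex.
From mathcomp Require Import Rstruct.
From mathcomp Require Import ring zify.
Set Implicit Arguments. Unset Strict Implicit. Unset Printing Implicit Defensive.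
Import GRing.Theory Num.Theory.
Local Open Scope ring_scope.

(* Compare the coefficients of degrees d_f + d, d_f + d - 1 and d_f + d - 2 on
   both sides of the recurrence.  By Taylor's formula the top coefficients of
   f(x + c) are a_0, a_1 + c d_f a_0 and a_2 + c (d_f - 1) a_1 + c^2 C(d_f, 2) a_0,
   where a_k is the coefficient of x^(d_f - k) in f, so in each of the three
   equations the leading coefficient a_0 <> 0 factors out of the new terms.
   The first equation gives (1); the second gives
   d_f (beta_(-1)^(d) - beta_(1)^(d)) = sum_i beta_(i)^(d-1), hence (2); when
   beta_(-1)^(d) = beta_(1)^(d) the a_1 and a_2 terms of the third one vanish,
   leaving the quadratic relation (3). *)

Lemma add3_eq0_two_neq0 (V : zmodType) (x y z : V) :
  x + y + z = 0 -> [|| x != 0, y != 0 | z != 0] ->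
  [|| (x != 0) && (y != 0), (x != 0) && (z != 0) | (y != 0) && (z != 0)].
Proof.
move/eqP; case: (x =P 0) => [-> | /eqP/negPf x_neq0];
  case: (y =P 0) => [-> | /eqP/negPf y_neq0]; case: (z =P 0) => [-> | /eqP/negPf z_neq0];
  by rewrite ?add0r ?addr0 ?eqxx ?x_neq0 ?y_neq0 ?z_neq0.
Qed.

Lemma add3_eq0_addr_neq0 (R : numDomainType) (x y z : R) :
  x + y + z = 0 -> x = z -> [|| x != 0, y != 0 | z != 0] -> x + z != 0.
Proof.
move=> xyz0 xz; rewrite -xz in xyz0 *; apply: contraL => /eqP xx0.
have : x *+ 2 == 0 by rewrite mulr2n xx0.
rewrite mulrn_eq0 => /eqP x0.
by move: xyz0; rewrite x0 add0r addr0 => ->; rewrite eqxx.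
Qed.

Lemma comp_poly_XaddC_taylor (R : comNzRingType) (p : {poly R}) (c : R) n :
  (size p <= n)%N -> p \Po ('X + c%:P) = \sum_(i < n) p^`N(i) * (c ^+ i)%:P.
Proof.
move=> le_p_n; rewrite /comp_poly (nderiv_taylor_wide (n := n) (mulrC _ _)) ?size_map_polyC //.
by apply: eq_bigr => i _; rewrite nderivn_map rmorphXn -[_.['X]]/(_ \Po 'X) comp_polyXr.
Qed.

Lemma coef_comp_poly_XaddC (R : comNzRingType) (p : {poly R}) (c : R) m K :
  (size p <= m + K)%N ->
  (p \Po ('X + c%:P))`_m = \sum_(i < K) p`_(i + m) *+ 'C(i + m, i) * c ^+ i.
Proof.
move=> le_p_mK; rewrite (comp_poly_XaddC_taylor c le_p_mK) coef_sum.
rewrite (big_ord_widen (m + K) (fun i => p`_(i + m) *+ 'C(i + m, i) * c ^+ i))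
  ?leq_addl // [RHS]big_mkcond; apply: eq_bigr => -[i /= _] _.
rewrite coefMC coef_nderivn; case: ltnP => // le_K_i.
rewrite nth_default ?mul0rn ?mul0r //.
by apply: leq_trans le_p_mK _; rewrite addnC leq_add2r.
Qed.

Lemma coefM_top (R : nzSemiRingType) (p q : {poly R}) N M k :
  (k <= N)%N -> (k <= M)%N -> (size p <= N.+1)%N -> (size q <= M.+1)%N ->
  (p * q)`_(N + M - k) = \sum_(i < k.+1) p`_(N - k + i) * q`_(M - i).
Proof.
move=> kN kM sp sq; rewrite coefM -(big_mkord xpredT (fun j => p`_j * q`_(N + M - k - j))).
rewrite (big_cat_nat _ (n := N - k)) //; last lia.
rewrite (big_cat_nat _ (m := N - k) (n := N.+1)) /=; [|lia|lia].
rewrite big1_seq => [|j /andP[_]]; last first.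
  rewrite mem_index_iota => /andP[_ ltjNk].
  by rewrite (nth_default _ (leq_trans sq _)) ?mulr0 //; lia.
rewrite [X in _ + (_ + X)]big1_seq => [|j /andP[_]]; last first.
  by rewrite mem_index_iota => /andP[leNj _]; rewrite (nth_default _ (leq_trans sp leNj)) mul0r.
rewrite add0r addr0 -{1}(add0n (N - k)%N) big_addn big_mkord.
rewrite (_ : (N.+1 - (N - k) = k.+1)%N); last lia.
by apply: eq_bigr => i _; rewrite addnC; congr (_ * q`_ _); lia.
Qed.

Definition topcoef (p : {poly CC}) (N k : nat) : CC := coefz p (N%:Z - k%:Z).

Lemma topcoefE p N k : topcoef p N k = if (k <= N)%N then p`_(N - k) else 0.
Proof.
rewrite /topcoef; case: leqP => [/subzn -> // | ltNk].
by have [j ->] : exists j, N%:Z - k%:Z = Negz j by exists (k - N).-1; rewrite NegzE; lia.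
Qed.

Lemma topcoefD p q N k : topcoef (p + q) N k = topcoef p N k + topcoef q N k.
Proof. by rewrite !topcoefE; case: ifP; rewrite ?coefD ?addr0. Qed.

Lemma topcoef0 N k : topcoef 0 N k = 0.
Proof. by rewrite topcoefE coef0; case: ifP. Qed.

Lemma deg_leqE p N : (deg p <= N)%N = (size p <= N.+1)%N.
Proof. by rewrite /deg -subn1 leq_subLR add1n. Qed.

Lemma deg_shift f c : deg (shift f c) = deg f.
Proof. by rewrite /deg /shift size_comp_poly2 ?size_XaddC. Qed.

Lemma topcoef_lead p : topcoef p (deg p) 0 = lead_coef p.
Proof. by rewrite topcoefE subn0 lead_coefE. Qed.

Lemma topcoef0_neq0 (b : {poly CC}) d : b != 0 -> (deg b <= d)%N ->
  (topcoef b d 0 != 0) = (deg b == d).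
Proof.
move=> nz_b; rewrite leq_eqVlt => /orP[/eqP <- | lt_bd].
  by rewrite topcoef_lead lead_coef_eq0 nz_b eqxx.
rewrite topcoefE subn0 leq0n nth_default ?eqxx ?(ltn_eqF lt_bd) //.
by move: lt_bd; rewrite /deg; case: (size b).
Qed.

Lemma coefz_topcoef (p : {poly CC}) (N : nat) : coefz p N = topcoef p N 0.
Proof. by rewrite /topcoef subr0. Qed.

Lemma topcoef_mulXn p N j k : (j <= k)%N -> topcoef p N j = ('X^k * p)`_(N + k - j).
Proof.
move=> le_jk; rewrite topcoefE coefXnM.
case: leqP => le_jN; case: ltnP => //; try lia.
by move=> _; congr nth; lia.
Qed.

Lemma topcoef_mul p q N M k : (deg p <= N)%N -> (deg q <= M)%N ->
  topcoef (p * q) (N + M) k = \sum_(i < k.+1) topcoef p N (k - i) * topcoef q M i.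
Proof.
rewrite !deg_leqE => sp sq.
have size_mulXk (r : {poly CC}) L :
    (size r <= L.+1)%N -> (size ('X^k * r)%R <= (L + k).+1)%N.
  by move=> sr; apply: leq_trans (size_polyMleq _ _) _; rewrite size_polyXn; lia.
rewrite (topcoef_mulXn _ _ (leq_addl k k)) exprD mulrACA.
rewrite (_ : (N + M + (k + k) - k = (N + k) + (M + k) - k)%N); last lia.
rewrite coefM_top ?leq_addl ?size_mulXk //; apply: eq_bigr => -[i /= lt_ik] _.
rewrite (topcoef_mulXn p N (leq_subr i k)) (topcoef_mulXn q M (lt_ik : i <= k)%N).
by congr (_`_ _ * _); lia.
Qed.

Lemma topcoef_shift f c n k : (deg f <= n)%N ->
  topcoef (shift f c) n k = \sum_(i < k.+1) topcoef f n (k - i) *+ 'C(n + i - k, i) * c ^+ i.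
Proof.
rewrite deg_leqE topcoefE => sf; case: leqP => [le_kn | lt_nk].
  have sfk : (size f <= n - k + k.+1)%N by lia.
  rewrite /shift (coef_comp_poly_XaddC c sfk).
  apply: eq_bigr => -[i /= lt_ik] _; rewrite topcoefE ifT; last lia.
  by congr (f`_ _ *+ 'C(_, _) * _); lia.
rewrite big1 // => -[i /= lt_ik] _; rewrite topcoefE; case: leqP => [le_kin | _].
  by rewrite bin_small ?mulr0n ?mul0r //; lia.
by rewrite mul0rn mul0r.
Qed.

Section ThreeTermRecurrence.

Variables (f bm b0 bp : {poly CC}) (d : nat).
Hypotheses (dbm : (deg bm <= d)%N) (db0 : (deg b0 <= d)%N) (dbp : (deg bp <= d)%N).
Hypothesis recurrence : shift f 1 * bp + f * b0 + shift f (-1) * bm = 0.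

Let n := deg f.
Let a k := topcoef f n k.
Let m k := topcoef bm d k.
Let z k := topcoef b0 d k.
Let p k := topcoef bp d k.
Let s k := m k + z k + p k.

Lemma recurrence_topcoefs :
  [/\ a 0 * s 0 = 0,
      a 0 * (s 1 + n%:R * (p 0 - m 0)) + a 1 * s 0 = 0
    & a 0 * (s 2 + n%:R * (- m 1 + p 1) + 'C(n, 2)%:R * (m 0 + p 0))
        + a 1 * (s 1 + n.-1%:R * (p 0 - m 0)) + a 2 * s 0 = 0].
Proof.
have top k : topcoef (shift f 1 * bp) (n + d) k + topcoef (f * b0) (n + d) k
    + topcoef (shift f (-1) * bm) (n + d) k = 0.
  by rewrite -!topcoefD recurrence topcoef0.
split; [move: (top 0%N) | move: (top 1%N) | move: (top 2%N)];
  rewrite !topcoef_mul ?deg_shift // !big_ord_recr !big_ord0 /=;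
  rewrite !topcoef_shift // !big_ord_recr !big_ord0 /=;
  rewrite ?subn0 ?subnn ?subSS ?subn0 ?bin0 ?addnK ?bin1 ?addn1 ?subSS ?subn1;
  by move=> <-; rewrite /s /m /z /p /a; ring.
Qed.

Hypothesis nz_f : f != 0.

Lemma recurrence_topcoef_sums :
  [/\ s 0 = 0, s 1 = n%:R * (m 0 - p 0)
    & m 0 = p 0 -> s 2 + n%:R * (- m 1 + p 1) + 'C(n, 2)%:R * (m 0 + p 0) = 0].
Proof.
have [E0 E1 E2] := recurrence_topcoefs.
have cancel_a0 x : a 0 * x = 0 -> x = 0.
  by move/eqP; rewrite mulf_eq0 /a topcoef_lead lead_coef_eq0 (negPf nz_f) => /eqP.
have s0 := cancel_a0 _ E0.
have s1 : s 1 = n%:R * (m 0 - p 0).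
  move: E1; rewrite s0 mulr0 addr0 => /cancel_a0/eqP; rewrite addr_eq0 => /eqP ->.
  by rewrite -mulrN opprB.
split=> // mp; apply: cancel_a0.
by move: E2; rewrite s0 s1 mp subrr !mulr0 !addr0 mulr0 addr0.
Qed.

End ThreeTermRecurrence.

Theorem lemma29 (f bm b0 bp : {poly CC}) :
  f != 0 -> bm != 0 -> b0 != 0 -> bp != 0 ->
  shift f 1 * bp + f * b0 + shift f (-1) * bm = 0 ->
  let df := deg f in
  let d : nat := maxn (deg bm) (maxn (deg b0) (deg bp)) in
  [/\ (coefz bm d + coefz b0 d + coefz bp d = 0
       /\ [|| (deg bm == d) && (deg b0 == d),
              (deg bm == d) && (deg bp == d) | (deg b0 == d) && (deg bp == d)]),
      (coefz bm d - coefz bp d != 0 ->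
         df%:R = (coefz bm (d%:Z - 1) + coefz b0 (d%:Z - 1) + coefz bp (d%:Z - 1))
                 / (coefz bm d - coefz bp d))
    & (coefz bm d - coefz bp d = 0 ->
         coefz bm d + coefz bp d != 0 /\
         (coefz bm (d%:Z - 2) + coefz b0 (d%:Z - 2) + coefz bp (d%:Z - 2))
           + df%:R * (- coefz bm (d%:Z - 1) + coefz bp (d%:Z - 1))
           + ('C(df, 2))%:R * (coefz bm d + coefz bp d) = 0)].
Proof.
move=> nz_f nz_bm nz_b0 nz_bp rec df d.
have dbm : (deg bm <= d)%N by rewrite /d; lia.
have db0 : (deg b0 <= d)%N by rewrite /d; lia.
have dbp : (deg bp <= d)%N by rewrite /d; lia.
have [s0 s1 s2] := recurrence_topcoef_sums dbm db0 dbp rec nz_f.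
have top_d : [|| deg bm == d, deg b0 == d | deg bp == d] by rewrite /d; lia.
rewrite -(topcoef0_neq0 nz_bm dbm) -(topcoef0_neq0 nz_b0 db0) -(topcoef0_neq0 nz_bp dbp)
  in top_d *.
rewrite !coefz_topcoef -!/(topcoef _ d 1) -!/(topcoef _ d 2).
split.
- by split=> //; apply: add3_eq0_two_neq0.
- by move=> nz_mp; rewrite s1 mulfK.
- by move=> /subr0_eq mp; split; [exact: add3_eq0_addr_neq0 s0 mp top_d | exact: s2].
Qed.
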